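(* Let $\pi$ and $\tau$ be endhered patterns of the same size $p$ (identified with permutations of $\{1,\dots,p\}$). If $\pi=\operatorname{letw}(\tau)$ or $\pi=\operatorname{retw}(\tau)$, then for all integers $n,k,m$, $$a_{n,k,m}(\pi,\tau)=a_{n,k,m}(\tau,\pi).$$ In particular, $a_{n,k}(\pi)=a_{n,k}(\tau)$ for all $n,k$.
   Context: A matching of size $n$ is a set of $n$ arcs $(a,b)$ with $1\le a<b\le 2n$ such that each point of $\{1,\dots,2n\}$ belongs to exactly one arc; $a$ is the starting point and $b$ the ending point of the arc. An endhered pattern of size $p$ is a matching of size $p$ in which every starting point precedes every ending point, i.e. its starting points are $1,\dots,p$ and ending points $p+1,\dots,2p$; it is identified with the permutation $\pi=\pi_1\dots\pi_p$ where $\pi_t$ is the starting point of the arc whose ending point is $p+t$. A matching $\mu$ of size $n$ contains $\pi$ at position $(i+1,j+1)$ (integers $i\ge 0$, $j\ge i+p$) if for every $s=1,\dots,p$ the pair $(i+s,\,j+\pi^{-1}(s))$ is an arc of $\mu$, where $\pi^{-1}$ is the inverse permutation; i.e. the arcs starting at $i+1,\dots,i+p$ end exactly at $j+1,\dots,j+p$ and form the pattern $\pi$. The number of occurrences of $\pi$ in $\mu$ is the number of positions at which $\mu$ contains $\pi$. $a_{n,k}(\pi)$ is the number of matchings of size $n$ with exactly $k$ occurrences of $\pi$, and $a_{n,k,m}(\pi,\tau)$ is the number of matchings of size $n$ with exactly $k$ occurrences of $\pi$ and exactly $m$ occurrences of $\tau$. The left endhered twist $\operatorname{letw}$ (resp.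 right endhered twist $\operatorname{retw}$) transforms a matching by reversing every maximal run of consecutive positions that are all starting points (resp. all ending points): within a maximal run $[a,b]$ of starting (resp. ending) points, the arc that had its starting (resp. ending) point at $a+t$ gets it at $b-t$, other endpoints unchanged. Applied to an endhered pattern (viewed as a matching) these give again endhered patterns. *)

(* All points are 0-indexed: point x of the paper is x-1 here. *)
From mathcomp Require Import all_boot all_order all_fingroup.
Set Implicit Arguments. Unset Strict Implicit. Unset Printing Implicit Defensive.

(* A matching on N points {0,..,N-1} is a fixed-point-free involution f:
   f x is the partner of x; the arc is (x, f x) with starting point x iff x < f x.
   A matching of size n lives on N = n.*2 points. *)
Definition is_matching N (f : {ffun 'I_N -> 'I_N}) : bool :=
  [forall x, (f (f x) == x) && (f x != x)].

Definition isS N (f : {ffun 'I_N -> 'I_N}) (k : nat) : bool :=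
  [exists x : 'I_N, (val x == k) && (x < f x)].
Definition isE N (f : {ffun 'I_N -> 'I_N}) (k : nat) : bool :=
  [exists x : 'I_N, (val x == k) && (f x < x)].

(* For a point k with Q k, the maximal run [run_lo, run_hi] of consecutive
   points satisfying Q and containing k. *)
Definition run_hi N (Q : nat -> bool) (k : nat) : nat :=
  k + find (fun i => ~~ Q (k + i.+1)) (iota 0 N).
Definition run_lo (Q : nat -> bool) (k : nat) : nat :=
  k - find (fun i => ~~ Q (k - i.+1)) (iota 0 k).

Definition run_rev N (Q : nat -> bool) (k : nat) : nat :=
  if Q k then run_lo Q k + run_hi N Q k - k else k.

Definition twist N (Q : nat -> bool) (f : {ffun 'I_N -> 'I_N}) : {ffun 'I_N -> 'I_N} :=
  let sg (x : 'I_N) : 'I_N := insubd x (run_rev N Q (val x)) in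
  [ffun y => sg (f (sg y))].

(* left endhered twist: reverse every maximal run of starting points;
   right endhered twist: reverse every maximal run of ending points. *)
Definition letw N (f : {ffun 'I_N -> 'I_N}) : {ffun 'I_N -> 'I_N} := twist (isS f) f.
Definition retw N (f : {ffun 'I_N -> 'I_N}) : {ffun 'I_N -> 'I_N} := twist (isE f) f.

(* Endhered pattern of size p, given by pi : 'S_p (0-indexed): pi t is the
   starting point (in 0..p-1) of the arc whose ending point is p + t. *)
Definition pat_part p (pi : {perm 'I_p}) (k : nat) : nat :=
  match (insub k : option 'I_p) with
  | Some t => p + val ((pi^-1)%g t)
  | None =>
    match (insub (k - p) : option 'I_p) with
    | Some t => val (pi t)
    | None => k
    end
  end.

Definition pat_matching p (pi : {perm 'I_p}) : {ffun 'I_(p + p) -> 'I_(p + p)} :=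
  [ffun x => insubd x (pat_part pi (val x))].

Definition occurs_at N p (pi : {perm 'I_p}) (f : {ffun 'I_N -> 'I_N}) (i j : nat) : bool :=
  (i + p <= j) &&
  [forall s : 'I_p, [exists x : 'I_N,
     (val x == i + s) && (val (f x) == j + val ((pi^-1)%g s))]].

(* Number of occurrences (for p >= 1 every occurrence has i, j < N). *)
Definition occ N p (pi : {perm 'I_p}) (f : {ffun 'I_N -> 'I_N}) : nat :=
  #|[set ij : 'I_N * 'I_N | occurs_at pi f ij.1 ij.2]|.

Definition a_nk p (pi : {perm 'I_p}) (n k : nat) : nat :=
  #|[set f : {ffun 'I_(n.*2) -> 'I_(n.*2)} | is_matching f && (occ pi f == k)]|.

Definition a_nkm p (pi tau : {perm 'I_p}) (n k m : nat) : nat :=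
  #|[set f : {ffun 'I_(n.*2) -> 'I_(n.*2)} |
      [&& is_matching f, occ pi f == k & occ tau f == m]]|.

From mathcomp Require Import all_boot all_order all_fingroup zify.
Set Implicit Arguments. Unset Strict Implicit. Unset Printing Implicit Defensive.

(* The left twist is an involution on matchings which keeps the set of
   starting points fixed, and the right twist one which keeps the set of
   ending points fixed.  An occurrence of an endhered pattern sigma at (i, j)
   is a block i, ..., i+p-1 of starting points matched onto a block
   j, ..., j+p-1 of ending points.  The starting block lies inside a single
   maximal run of starting points, which the left twist reverses; hence it
   becomes an occurrence, at (r (i+p-1), j), of sigma with its starting points
   reversed, where r is the reversal of runs.  The right twist acts in the
   same way on the ending block.  So if pi is a twist of tau, the twist sends
   occurrences of tau to occurrences of pi and vice versa, and being a
   bijection on matchings it swaps the two counts. *)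

Lemma before_find_iota (P : pred nat) n i : i < find P (iota 0 n) -> ~~ P i.
Proof.
move=> lt_i; have lt_in : i < n.
  by apply: leq_trans lt_i _; rewrite -{2}(size_iota 0 n) find_size.
by have := before_find 0 lt_i; rewrite nth_iota // add0n => ->.
Qed.

Lemma find_iota_pred (P : pred nat) n : find P (iota 0 n) < n -> P (find P (iota 0 n)).
Proof.
move=> lt_n; have := lt_n; rewrite -{2}(size_iota 0 n) -has_find => /(nth_find 0).
by rewrite nth_iota ?add0n.
Qed.

Section MaximalRuns.
Variable Q : nat -> bool.

Definition maximal_run a b :=
  [/\ forall y, a <= y <= b -> Q y, a = 0 \/ ~~ Q a.-1 & ~~ Q b.+1].

Lemma maximal_run_sub a b a' b' x : maximal_run a b -> a <= x <= b ->
  (forall y, a' <= y <= b' -> Q y) -> a' <= x <= b' -> a <= a' /\ b' <= b.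
Proof.
move=> [_ a_max b_max] xab Qab' xab'; split; rewrite leqNgt; apply/negP => lt.
- by case: a_max => [|/negP[]]; [lia | apply: Qab'; lia].
- by move/negP: b_max; apply; apply: Qab'; lia.
Qed.

Lemma maximal_run_unique a b a' b' x : maximal_run a b -> maximal_run a' b' ->
  a <= x <= b -> a' <= x <= b' -> a = a' /\ b = b'.
Proof.
move=> M M' xab xab'; have [Qab _ _] := M; have [Qab' _ _] := M'.
have := maximal_run_sub M xab Qab' xab'; have := maximal_run_sub M' xab' Qab xab.
lia.
Qed.

Lemma run_lo_spec k : Q k ->
  (forall y, run_lo Q k <= y <= k -> Q y) /\ (run_lo Q k = 0 \/ ~~ Q (run_lo Q k).-1).
Proof.
rewrite /run_lo; set P := fun i => ~~ Q (k - i.+1); set e := find P _ => Qk.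
have le_ek : e <= k by rewrite -[leqRHS](size_iota 0 k) find_size.
split=> [y /andP[ey yk]|].
  have [->|lt_yk] : y = k \/ y < k by lia.
    exact: Qk.
  have := @before_find_iota P k (k - y).-1; rewrite -/e /P negbK.
  have -> : k - (k - y).-1.+1 = y by lia.
  by apply; lia.
have [lt_ek|->] : e < k \/ e = k by lia.
  right; have := find_iota_pred lt_ek; rewrite /P -/e.
  by have -> : (k - e).-1 = k - e.+1 by lia.
by left; rewrite subnn.
Qed.

Variable N : nat.
Hypothesis ltQ : forall k, Q k -> k < N.

Lemma run_hi_spec k : Q k ->
  (forall y, k <= y <= run_hi N Q k -> Q y) /\ ~~ Q (run_hi N Q k).+1.
Proof.
rewrite /run_hi; set P := fun i => ~~ Q (k + i.+1); set d := find P _ => Qk.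
have lt_dN : d < N.
  rewrite -[ltnRHS](size_iota 0 N) -has_find; apply/hasP; exists N.-1.
    by rewrite mem_iota; have := ltQ Qk; lia.
  by apply/negP => /ltQ; lia.
split=> [y /andP[ky yd]|]; last by rewrite -addnS; exact: find_iota_pred lt_dN.
have [->|lt_ky] : y = k \/ k < y by lia.
  exact: Qk.
have := @before_find_iota P N (y - k).-1; rewrite -/d /P negbK.
have -> : k + (y - k).-1.+1 = y by lia.
by apply; lia.
Qed.

Lemma run_maximal k : Q k ->
  maximal_run (run_lo Q k) (run_hi N Q k) /\ run_lo Q k <= k <= run_hi N Q k.
Proof.
move=> Qk; have [Qlo lo_max] := run_lo_spec Qk; have [Qhi hi_max] := run_hi_spec Qk.
have bounds : run_lo Q k <= k <= run_hi N Q k by rewrite /run_lo /run_hi leq_subr leq_addr.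
split=> //; split=> // y /andP[loy yhi].
by have [yk|ky] := leqP y k; [apply: Qlo | apply: Qhi]; lia.
Qed.

Lemma maximal_run_exists x : Q x -> exists a b, maximal_run a b /\ a <= x <= b.
Proof. by move=> /run_maximal; exists (run_lo Q x), (run_hi N Q x). Qed.

Local Notation r := (run_rev N Q).

Lemma run_rev_maximal a b x : maximal_run a b -> a <= x <= b -> r x = a + b - x.
Proof.
move=> M xab; have Qx : Q x by case: M => + _ _; apply.
have [Mx xlh] := run_maximal Qx.
by have [<- <-] := maximal_run_unique Mx M xlh xab; rewrite /run_rev Qx.
Qed.

Lemma run_rev_out x : ~~ Q x -> r x = x.
Proof. by rewrite /run_rev => /negbTE ->. Qed.

Lemma Q_run_rev x : Q (r x) = Q x.
Proof.
case Qx: (Q x); last by rewrite run_rev_out ?Qx.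
have [a [b [M xab]]] := maximal_run_exists Qx.
by rewrite (run_rev_maximal M xab); case: M => Qab _ _; apply: Qab; lia.
Qed.

Lemma run_revK : involutive r.
Proof.
move=> x; case Qx: (Q x); last by rewrite !run_rev_out ?Qx.
have [a [b [M xab]]] := maximal_run_exists Qx.
by rewrite (run_rev_maximal M xab) (run_rev_maximal M); lia.
Qed.

Lemma run_rev_ltn x : (r x < N) = (x < N).
Proof.
case Qx: (Q x); last by rewrite run_rev_out ?Qx.
by rewrite (ltQ Qx) ltQ ?Q_run_rev.
Qed.

Lemma ltn_run_revl x z : Q x -> ~~ Q z -> (r x < z) = (x < z).
Proof.
move=> Qx nQz; have [a [b [M xab]]] := maximal_run_exists Qx.
have : ~~ (a <= z <= b) by apply: contra nQz; case: M => + _ _; apply.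
by rewrite (run_rev_maximal M xab); lia.
Qed.

Lemma ltn_run_revr x z : Q x -> ~~ Q z -> (z < r x) = (z < x).
Proof.
move=> Qx nQz; have [a [b [M xab]]] := maximal_run_exists Qx.
have : ~~ (a <= z <= b) by apply: contra nQz; case: M => + _ _; apply.
by rewrite (run_rev_maximal M xab); lia.
Qed.

Lemma run_rev_block u p : (forall s, s <= p -> Q (u + s)) ->
  forall s, s <= p -> r (u + s) = r (u + p) + (p - s).
Proof.
move=> Qblock s le_sp; have Qu : Q u by rewrite -[u]addn0; apply: Qblock.
have [a [b [M uab]]] := maximal_run_exists Qu.
have [le_au le_upb] : a <= u /\ u + p <= b.
  apply: (maximal_run_sub (a' := u) (b' := u + p) M uab) => [y /andP[uy yup]|].
    by have := Qblock (y - u); rewrite subnKC //; apply; lia.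
  by rewrite leqnn leq_addr.
by rewrite !(run_rev_maximal M); lia.
Qed.

End MaximalRuns.

Lemma eq_run_rev N (Q Q' : nat -> bool) : Q =1 Q' -> run_rev N Q =1 run_rev N Q'.
Proof.
move=> eqQ k; rewrite /run_rev /run_hi /run_lo eqQ.
have eq_findQ (g : nat -> nat) : find (fun i => ~~ Q (g i)) =1 find (fun i => ~~ Q' (g i)).
  by apply: eq_find => i; rewrite eqQ.
by rewrite (eq_findQ (fun i => k - i.+1)) (eq_findQ (fun i => k + i.+1)).
Qed.

Section Matchings.
Variables (N : nat) (f : {ffun 'I_N -> 'I_N}).

Lemma isS_ord (x : 'I_N) : isS f x = (x < f x).
Proof.
apply/existsP/idP => [[y /andP[/eqP/val_inj -> //]] | ?].
by exists x; rewrite eqxx.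
Qed.

Lemma isE_ord (x : 'I_N) : isE f x = (f x < x).
Proof.
apply/existsP/idP => [[y /andP[/eqP/val_inj -> //]] | ?].
by exists x; rewrite eqxx.
Qed.

Lemma isS_lt k : isS f k -> k < N.
Proof. by case/existsP => x /andP[/eqP <- _]; apply: ltn_ord. Qed.

Lemma isE_lt k : isE f k -> k < N.
Proof. by case/existsP => x /andP[/eqP <- _]; apply: ltn_ord. Qed.

Hypothesis Mf : is_matching f.

Lemma matchingK : involutive f.
Proof. by move=> x; move/forallP: Mf => /(_ x) /andP[/eqP]. Qed.

Lemma matching_neq (x : 'I_N) : (f x : nat) != x.
Proof. by move/forallP: Mf => /(_ x) /andP[_]. Qed.

Lemma isS_matching (x : 'I_N) : isS f (f x) = ~~ isS f x.
Proof. by rewrite !isS_ord matchingK; have := matching_neq x; lia. Qed.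

Lemma isE_matching (x : 'I_N) : isE f (f x) = ~~ isE f x.
Proof. by rewrite !isE_ord matchingK; have := matching_neq x; lia. Qed.

Lemma isE_isS k : isE f k = (k < N) && ~~ isS f k.
Proof.
have [lt_kN|le_Nk] := ltnP k N; last by apply/negbTE/negP => /isE_lt; lia.
pose x := Ordinal lt_kN; have -> : k = x by [].
by rewrite isE_ord isS_ord; have := matching_neq x; lia.
Qed.

End Matchings.

Section Twist.
Variables (N : nat) (Q : nat -> bool).
Hypothesis ltQ : forall k, Q k -> k < N.

Definition run_rev_ord (x : 'I_N) : 'I_N := insubd x (run_rev N Q x).

Lemma val_run_rev_ord (x : 'I_N) : val (run_rev_ord x) = run_rev N Q x.
Proof. by rewrite val_insubd run_rev_ltn ?ltn_ord. Qed.

Lemma run_rev_ord_out (x : 'I_N) : ~~ Q x -> run_rev_ord x = x.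
Proof. by move=> nQx; apply: val_inj; rewrite val_run_rev_ord run_rev_out. Qed.

Lemma run_rev_ordK : involutive run_rev_ord.
Proof. by move=> x; apply: val_inj; rewrite !val_run_rev_ord run_revK. Qed.

Lemma twistE (f : {ffun 'I_N -> 'I_N}) x : twist Q f x = run_rev_ord (f (run_rev_ord x)).
Proof. by rewrite ffunE. Qed.

Lemma twistK : involutive (@twist N Q).
Proof. by move=> f; apply/ffunP => x; rewrite !twistE !run_rev_ordK. Qed.

Lemma twist_matching (f : {ffun 'I_N -> 'I_N}) : is_matching f -> is_matching (twist Q f).
Proof.
move=> Mf; apply/forallP => x; rewrite !twistE run_rev_ordK matchingK // run_rev_ordK eqxx /=.
apply/eqP => /(congr1 run_rev_ord); rewrite run_rev_ordK => fixed.
by have := matching_neq Mf (run_rev_ord x); rewrite fixed eqxx.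
Qed.

Lemma isS_twist (f : {ffun 'I_N -> 'I_N}) : is_matching f -> (forall x, Q (f x) = ~~ Q x) ->
  isS (twist Q f) =1 isS f \o run_rev N Q.
Proof.
move=> Mf Qf k /=; have [lt_kN|le_Nk] := ltnP k N; last first.
  have nQk : ~~ Q k by apply/negP => /ltQ; lia.
  by rewrite run_rev_out //; apply/idP/idP => /isS_lt; lia.
pose x := Ordinal lt_kN; have -> : k = x by [].
rewrite -val_run_rev_ord !isS_ord twistE val_run_rev_ord; case Qx: (Q x).
- have Q_rx : Q (run_rev_ord x) by rewrite val_run_rev_ord Q_run_rev.
  by rewrite run_rev_out ?Qf ?Q_rx // val_run_rev_ord ltn_run_revl ?Qf ?Q_rx.
- by rewrite run_rev_ord_out ?Qx // ltn_run_revr ?Qf ?Qx.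
Qed.

End Twist.

Lemma eq_twist N (Q Q' : nat -> bool) (f : {ffun 'I_N -> 'I_N}) :
  Q =1 Q' -> twist Q f = twist Q' f.
Proof. by move=> eqQ; apply/ffunP => x; rewrite !ffunE /= !(eq_run_rev N eqQ). Qed.

Section EndheredTwists.
Variables (N : nat) (f : {ffun 'I_N -> 'I_N}).
Hypothesis Mf : is_matching f.

Lemma letw_matching : is_matching (letw f).
Proof. exact/twist_matching/Mf/isS_lt. Qed.

Lemma retw_matching : is_matching (retw f).
Proof. exact/twist_matching/Mf/isE_lt. Qed.

Lemma isS_letw : isS (letw f) =1 isS f.
Proof.
move=> k; have ltS := @isS_lt _ f.
by rewrite isS_twist //= ?Q_run_rev //; exact: isS_matching.
Qed.

Lemma isE_retw : isE (retw f) =1 isE f.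
Proof.
move=> k; have ltE := @isE_lt _ f.
rewrite isE_isS ?retw_matching // isS_twist //=; last exact: isE_matching.
by rewrite -(run_rev_ltn ltE) -isE_isS // Q_run_rev.
Qed.

Lemma letwK : letw (letw f) = f.
Proof. by rewrite [letw (letw f)](eq_twist _ isS_letw) twistK //; exact: isS_lt. Qed.

Lemma retwK : retw (retw f) = f.
Proof. by rewrite [retw (retw f)](eq_twist _ isE_retw) twistK //; exact: isE_lt. Qed.

End EndheredTwists.

Lemma occurs_atP N p (sigma : {perm 'I_p}) (f : {ffun 'I_N -> 'I_N}) i j :
  reflect (i + p <= j /\ forall s : 'I_p,
             exists x : 'I_N, val x = i + s /\ val (f x) = j + (sigma^-1)%g s)
          (occurs_at sigma f i j).
Proof.
apply: (iffP andP) => -[le_ij occ_s]; split=> //.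
  move=> s; have /forallP/(_ s)/existsP[x /andP[/eqP xE /eqP fxE]] := occ_s.
  by exists x.
apply/forallP => s; apply/existsP; have [x [xE fxE]] := occ_s s.
by exists x; rewrite xE fxE !eqxx.
Qed.

Lemma occurs_at_ltn N p (sigma : {perm 'I_p.+1}) (f : {ffun 'I_N -> 'I_N}) i j :
  occurs_at sigma f i j -> (i < N) && (j < N).
Proof.
case/occurs_atP => le_ij occ_s; have [x [xE fxE]] := occ_s ord0.
by have := ltn_ord x; have := ltn_ord (f x); rewrite xE fxE /=; lia.
Qed.

Section Occurrences.
Variables (N p : nat) (sigma sigma' : {perm 'I_p.+1}) (f : {ffun 'I_N -> 'I_N}).
Hypothesis Mf : is_matching f.
Variables (i j : nat).
Hypothesis occ_ij : occurs_at sigma f i j.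

Lemma occurs_at_starts s : s <= p -> isS f (i + s).
Proof.
case/occurs_atP: occ_ij => le_ij occ_s le_sp.
have [x [xE fxE]] := occ_s (Ordinal (le_sp : s < p.+1)).
by rewrite -xE isS_ord fxE xE /=; lia.
Qed.

Lemma occurs_at_ends t : t <= p -> isE f (j + t).
Proof.
case/occurs_atP: occ_ij => le_ij occ_s le_tp.
have [x [xE fxE]] := occ_s (sigma (Ordinal (le_tp : t < p.+1))).
rewrite permK /= in fxE; rewrite -fxE isE_ord matchingK // fxE xE.
by have := ltn_ord (sigma (Ordinal (le_tp : t < p.+1))); lia.
Qed.

Lemma occurs_at_letw : (forall s, (sigma'^-1)%g s = (sigma^-1)%g (rev_ord s)) ->
  occurs_at sigma' (letw f) (run_rev N (isS f) (i + p)) j.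
Proof.
move=> rev_starts; have ltS := @isS_lt _ f.
have block := run_rev_block ltS occurs_at_starts.
have nS_ends t : t <= p -> ~~ isS f (j + t).
  by move=> /occurs_at_ends; rewrite isE_isS // => /andP[].
have lt_ij : run_rev N (isS f) i < j.
  have := occurs_at_starts (leq0n p); have := nS_ends 0 (leq0n p); rewrite !addn0.
  by move=> nSj Si; rewrite ltn_run_revl //; case/occurs_atP: occ_ij; lia.
case/occurs_atP: occ_ij => _ occ_s; apply/occurs_atP; split.
  by have := block 0 (leq0n p); rewrite addn0 subn0; lia.
move=> s; have [y [yE fyE]] := occ_s (rev_ord s).
exists (run_rev_ord (isS f) y); split.
  rewrite val_run_rev_ord // yE /= subSS block ?leq_subr // subKn //.
  by rewrite -ltnS.
rewrite twistE run_rev_ordK // val_run_rev_ord // fyE run_rev_out ?rev_starts //.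
by apply: nS_ends; rewrite -ltnS.
Qed.

Lemma occurs_at_retw : (forall s, (sigma'^-1)%g s = rev_ord ((sigma^-1)%g s)) ->
  occurs_at sigma' (retw f) i (run_rev N (isE f) (j + p)).
Proof.
move=> rev_ends; have ltE := @isE_lt _ f.
have block := run_rev_block ltE occurs_at_ends.
have nE_starts s : s <= p -> ~~ isE f (i + s).
  by move=> /occurs_at_starts; rewrite isE_isS // => ->; rewrite andbF.
case/occurs_atP: (occ_ij) => le_ij occ_s; apply/occurs_atP; split.
  by rewrite addnS ltn_run_revr ?occurs_at_ends ?nE_starts //; lia.
move=> s; have [x [xE fxE]] := occ_s s; exists x; split => //.
have le_sp : (sigma^-1)%g s <= p by rewrite -ltnS.
have x_fixed : run_rev_ord (isE f) x = x.
  by rewrite run_rev_ord_out // xE nE_starts // -ltnS.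
rewrite twistE x_fixed val_run_rev_ord // fxE block //.
by rewrite rev_ends /= subSS.
Qed.

End Occurrences.

Lemma occ_leq_of_inj N p (sigma sigma' : {perm 'I_p.+1}) (f f' : {ffun 'I_N -> 'I_N})
    (h : nat * nat -> nat * nat) :
  injective h ->
  (forall i j, occurs_at sigma f i j -> occurs_at sigma' f' (h (i, j)).1 (h (i, j)).2) ->
  occ sigma f <= occ sigma' f'.
Proof.
move=> inj_h occ_h; pose val2 (ij : 'I_N * 'I_N) := (val ij.1, val ij.2).
pose hN (ij : 'I_N * 'I_N) : 'I_N * 'I_N :=
  (insubd ij.1 (h (val2 ij)).1, insubd ij.2 (h (val2 ij)).2).
have val_hN (ij : 'I_N * 'I_N) : occurs_at sigma f ij.1 ij.2 -> val2 (hN ij) = h (val2 ij).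
  move=> /occ_h /occurs_at_ltn /andP[lt1 lt2].
  by rewrite /val2 /= !val_insubd lt1 lt2; case: (h _).
rewrite /occ -(card_in_imset (f := hN)) => [|ij ij']; last first.
  rewrite !inE => occ_ij occ_ij' /(congr1 val2); rewrite !val_hN // => /inj_h.
  by case: ij ij' {occ_ij occ_ij'} => [i j] [i' j'] [/val_inj -> /val_inj ->].
apply/subset_leq_card/subsetP => y /imsetP[ij]; rewrite inE => occ_ij ->.
by rewrite inE; have := occ_h _ _ occ_ij; rewrite -/(val2 ij) -val_hN.
Qed.

Section OccurrencesUnderTwists.
Variables (N p : nat) (sigma sigma' : {perm 'I_p.+1}).

Lemma occ_leq_letw (f : {ffun 'I_N -> 'I_N}) : is_matching f ->
  (forall s, (sigma'^-1)%g s = (sigma^-1)%g (rev_ord s)) ->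
  occ sigma f <= occ sigma' (letw f).
Proof.
move=> Mf rev_starts; have ltS := @isS_lt _ f.
apply: (occ_leq_of_inj (h := fun ij => (run_rev N (isS f) (ij.1 + p), ij.2))).
  by move=> [i j] [i' j'] [/(can_inj (run_revK ltS))/addIn -> ->].
by move=> i j occ_ij; apply: occurs_at_letw rev_starts.
Qed.

Lemma occ_leq_retw (f : {ffun 'I_N -> 'I_N}) : is_matching f ->
  (forall s, (sigma'^-1)%g s = rev_ord ((sigma^-1)%g s)) ->
  occ sigma f <= occ sigma' (retw f).
Proof.
move=> Mf rev_ends; have ltE := @isE_lt _ f.
apply: (occ_leq_of_inj (h := fun ij => (ij.1, run_rev N (isE f) (ij.2 + p)))).
  by move=> [i j] [i' j'] /= [-> /(can_inj (run_revK ltE))/addIn ->].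
by move=> i j occ_ij; apply: occurs_at_retw rev_ends.
Qed.

End OccurrencesUnderTwists.

Lemma occ_letw N p (sigma sigma' : {perm 'I_p.+1}) (f : {ffun 'I_N -> 'I_N}) :
  is_matching f -> (forall s, (sigma'^-1)%g s = (sigma^-1)%g (rev_ord s)) ->
  occ sigma' (letw f) = occ sigma f.
Proof.
move=> Mf rev_starts; apply/eqP; rewrite eqn_leq occ_leq_letw // andbT.
rewrite -{2}(letwK Mf) occ_leq_letw ?letw_matching // => s.
by rewrite rev_starts rev_ordK.
Qed.

Lemma occ_retw N p (sigma sigma' : {perm 'I_p.+1}) (f : {ffun 'I_N -> 'I_N}) :
  is_matching f -> (forall s, (sigma'^-1)%g s = rev_ord ((sigma^-1)%g s)) ->
  occ sigma' (retw f) = occ sigma f.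
Proof.
move=> Mf rev_ends; apply/eqP; rewrite eqn_leq occ_leq_retw // andbT.
rewrite -{2}(retwK Mf) occ_leq_retw ?retw_matching // => s.
by rewrite rev_ends rev_ordK.
Qed.

Section Patterns.
Variables (p : nat) (tau : {perm 'I_p}).

Lemma pat_matching_lshift (s : 'I_p) : val (pat_matching tau (lshift p s)) = p + (tau^-1)%g s.
Proof. by rewrite ffunE /pat_part /= valK val_insubd ltn_add2l ltn_ord. Qed.

Lemma pat_matching_rshift (t : 'I_p) : val (pat_matching tau (rshift p t)) = tau t.
Proof.
rewrite ffunE /pat_part /= insubF ?addKn ?valK ?val_insubd ?ltn_addr //.
by rewrite ltnNge leq_addr.
Qed.

Lemma isS_pat : isS (pat_matching tau) =1 (fun k => k < p).
Proof.
move=> k; have [lt_k|le_k] := ltnP k (p + p); last by apply/idP/idP => [/isS_lt|]; lia.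
pose x := Ordinal lt_k; have -> : k = x by [].
rewrite isS_ord; case: (splitP x) => [s|t] xE.
  have -> : x = lshift p s by exact: val_inj.
  by rewrite pat_matching_lshift /=; have := ltn_ord s; lia.
have -> : x = rshift p t by exact: val_inj.
by rewrite pat_matching_rshift /=; have := ltn_ord (tau t); lia.
Qed.

Lemma isE_pat : isE (pat_matching tau) =1 (fun k => p <= k < p + p).
Proof.
move=> k; have [lt_k|le_k] := ltnP k (p + p); last by apply/idP/idP => [/isE_lt|]; lia.
pose x := Ordinal lt_k; have -> : k = x by [].
rewrite isE_ord; case: (splitP x) => [s|t] xE.
  have -> : x = lshift p s by exact: val_inj.
  by rewrite pat_matching_lshift /=; have := ltn_ord s; lia.
have -> : x = rshift p t by exact: val_inj.
by rewrite pat_matching_rshift /=; have := ltn_ord (tau t); lia.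
Qed.

End Patterns.

Lemma letw_pat_matching_lshift p (tau : {perm 'I_p.+1}) (s : 'I_p.+1) :
  val (letw (pat_matching tau) (lshift p.+1 s)) = p.+1 + (tau^-1)%g (rev_ord s).
Proof.
pose Q k := k < p.+1; have ltQ k : Q k -> k < p.+1 + p.+1 by apply: ltn_addr.
have starts_run : maximal_run Q 0 p by split=> [y /andP[]||]; rewrite /Q ?ltnn //; left.
rewrite /letw (eq_twist _ (isS_pat tau)) twistE -/Q.
have -> : run_rev_ord Q (lshift p.+1 s) = lshift p.+1 (rev_ord s).
  apply: val_inj; rewrite val_run_rev_ord // (run_rev_maximal ltQ starts_run) /=; first lia.
  by rewrite -ltnS.
by rewrite val_run_rev_ord // pat_matching_lshift run_rev_out // /Q -leqNgt leq_addr.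
Qed.

Lemma retw_pat_matching_lshift p (tau : {perm 'I_p.+1}) (s : 'I_p.+1) :
  val (retw (pat_matching tau) (lshift p.+1 s)) = p.+1 + rev_ord ((tau^-1)%g s).
Proof.
pose Q k := p.+1 <= k < p.+1 + p.+1; have ltQ k : Q k -> k < p.+1 + p.+1 by case/andP.
have ends_run : maximal_run Q p.+1 (p.+1 + p).
  by split=> [y||]; rewrite /Q; try right; lia.
rewrite /retw (eq_twist _ (isE_pat tau)) twistE -/Q.
have -> : run_rev_ord Q (lshift p.+1 s) = lshift p.+1 s.
  by rewrite run_rev_ord_out // /Q /=; have := ltn_ord s; lia.
have lt_t := ltn_ord ((tau^-1)%g s).
by rewrite val_run_rev_ord // pat_matching_lshift (run_rev_maximal ltQ ends_run) /=; lia.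
Qed.

Lemma pat_matching_letw_inv p (pi tau : {perm 'I_p.+1}) :
  pat_matching pi = letw (pat_matching tau) ->
  forall s, (pi^-1)%g s = (tau^-1)%g (rev_ord s).
Proof.
move=> pi_tau s; apply/val_inj/(@addnI p.+1).
by rewrite -pat_matching_lshift pi_tau letw_pat_matching_lshift.
Qed.

Lemma pat_matching_retw_inv p (pi tau : {perm 'I_p.+1}) :
  pat_matching pi = retw (pat_matching tau) ->
  forall s, (pi^-1)%g s = rev_ord ((tau^-1)%g s).
Proof.
move=> pi_tau s; apply/val_inj/(@addnI p.+1).
by rewrite -pat_matching_lshift pi_tau retw_pat_matching_lshift.
Qed.

Lemma card_matchings_involution N (T : {ffun 'I_N -> 'I_N} -> {ffun 'I_N -> 'I_N})
    (P P' : pred {ffun 'I_N -> 'I_N}) :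
  (forall f, is_matching f -> is_matching (T f)) ->
  (forall f, is_matching f -> T (T f) = f) ->
  (forall f, is_matching f -> P' (T f) = P f) ->
  #|[set f | is_matching f && P f]| = #|[set f | is_matching f && P' f]|.
Proof.
move=> TM TK TP; rewrite -(card_in_imset (f := T)) => [|f g]; last first.
  by rewrite !inE => /andP[Mf _] /andP[Mg _] Tfg; rewrite -(TK f) // Tfg TK.
apply: eq_card => g; rewrite inE; apply/imsetP/andP => [[f]|[Mg P'g]].
  by rewrite inE => /andP[Mf Pf] ->; rewrite TM ?TP.
by exists (T g); rewrite ?TK // inE TM //= -TP ?TM ?TK.
Qed.

Lemma a_nkm_a_nk_swap p (pi tau : {perm 'I_p})
    (T : forall N, {ffun 'I_N -> 'I_N} -> {ffun 'I_N -> 'I_N}) :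
  (forall N f, is_matching f -> is_matching (T N f)) ->
  (forall N f, is_matching f -> T N (T N f) = f) ->
  (forall N f, is_matching f -> occ pi (T N f) = occ tau f) ->
  (forall N f, is_matching f -> occ tau (T N f) = occ pi f) ->
  (forall n k m, a_nkm pi tau n k m = a_nkm tau pi n k m) /\
  (forall n k, a_nk pi n k = a_nk tau n k).
Proof.
move=> TM TK T_pi T_tau; split=> [n k m | n k].
  apply: (card_matchings_involution (TM _) (TK _)) => f Mf.
  by rewrite T_pi ?T_tau.
apply: (card_matchings_involution (TM _) (TK _)) => f Mf.
by rewrite T_tau.
Qed.

Theorem lemma1 (p : nat) (pi tau : {perm 'I_p}) :
  (pat_matching pi = letw (pat_matching tau) \/
   pat_matching pi = retw (pat_matching tau)) ->
  (forall n k m, a_nkm pi tau n k m = a_nkm tau pi n k m) /\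
  (forall n k, a_nk pi n k = a_nk tau n k).
Proof.
case: p pi tau => [|p] pi tau twisted.
  by have -> : pi = tau by apply/permP => -[].
case: twisted => [/pat_matching_letw_inv rev_starts | /pat_matching_retw_inv rev_ends].
  apply: (a_nkm_a_nk_swap (T := @letw)) => N f Mf.
  - exact: letw_matching.
  - exact: letwK.
  - exact: occ_letw.
  - by apply: occ_letw => // s; rewrite rev_starts rev_ordK.
apply: (a_nkm_a_nk_swap (T := @retw)) => N f Mf.
- exact: retw_matching.
- exact: retwK.
- exact: occ_retw.
- by apply: occ_retw => // s; rewrite rev_ends rev_ordK.
Qed.
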